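(* Let $n\ge 2$ and let $B$ be an $n\times n$ agreement matrix. If $0<H(X_B^+)\le H(Y_B^+)$, then $IA_\epsilon(B)$ exists and $$IA_\epsilon(B)=1+\frac{H(Y_B^+)-H((X_BY_B)^+)}{H(X_B^+)}.$$
   Context: An $n\times n$ agreement matrix $B$ has nonnegative entries $B[y][x]$ (row $y$, column $x$), not all zero. For any $n\times n$ matrix $M$ with nonnegative real entries not all zero, let $S_M=\sum_{y,x}M[y][x]$ and define random variables $X_M$ on $\{1,\dots,n\}$ with $P(X_M=x)=\sum_yM[y][x]/S_M$, $Y_M$ with $P(Y_M=y)=\sum_xM[y][x]/S_M$, and the joint variable $X_MY_M$ with $P(X_MY_M=(y,x))=M[y][x]/S_M$. $H$ is Shannon entropy in base 2, defined only when all probabilities are positive. The information agreement is $IA(M)=\frac{H(X_M)+H(Y_M)-H(X_MY_M)}{\min\{H(X_M),H(Y_M)\}}$. For $\epsilon>0$, the $0$-freed matrix $B_\epsilon$ is obtained from $B$ by replacing every zero entry by $\epsilon$; then $IA_\epsilon(B)=\lim_{\epsilon\to0^+}IA(B_\epsilon)$ (when this limit exists). For a random variable $Z$ on $\mathcal{Z}$, the refined variable $Z^+$ is $Z$ restricted to $\{z:p_Z(z)>0\}$ with the same probabilities, so $H(Z^+)=-\sum_{z:\,p_Z(z)>0}p_Z(z)\log_2p_Z(z)$. *)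

From HB Require Import structures.
From mathcomp Require Import all_boot all_order all_algebra.
From mathcomp Require Import all_classical all_reals all_analysis.
Set Implicit Arguments. Unset Strict Implicit. Unset Printing Implicit Defensive.
Import Order.TTheory GRing.Theory Num.Theory.
Import numFieldNormedType.Exports.
Local Open Scope ring_scope.

Section IA.
Variable R : realType.

Definition log2 (x : R) : R := ln x / ln 2.

Definition entropy (I : finType) (p : I -> R) : R :=
  - \sum_(i : I) p i * log2 (p i).

(* entropy of the refined variable: sum only over the support *)
Definition entropy_plus (I : finType) (p : I -> R) : R :=
  - \sum_(i : I | 0 < p i) p i * log2 (p i).

Variable n : nat.

(* M y x : row y, column x *)
Definition Smx (M : 'M[R]_n) : R := \sum_(y < n) \sum_(x < n) M y x.
Definition pX (M : 'M[R]_n) (x : 'I_n) : R := (\sum_(y < n) M y x) / Smx M.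
Definition pY (M : 'M[R]_n) (y : 'I_n) : R := (\sum_(x < n) M y x) / Smx M.
Definition pXY (M : 'M[R]_n) (yx : 'I_n * 'I_n) : R := M yx.1 yx.2 / Smx M.

Definition IA (M : 'M[R]_n) : R :=
  (entropy (pX M) + entropy (pY M) - entropy (pXY M))
  / Num.min (entropy (pX M)) (entropy (pY M)).

Definition zero_freed (B : 'M[R]_n) (eps : R) : 'M[R]_n :=
  \matrix_(y, x) (if B y x == 0 then eps else B y x).

End IA.

From HB Require Import structures.
From mathcomp Require Import all_boot all_order all_algebra.
From mathcomp Require Import all_classical all_reals all_analysis.
From mathcomp Require Import ring lra.
Set Implicit Arguments. Unset Strict Implicit. Unset Printing Implicit Defensive.
Import Order.TTheory GRing.Theory Num.Theory.
Import numFieldNormedType.Exports.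
Local Open Scope classical_set_scope.
Local Open Scope ring_scope.

(** Since [|t ln t| <= 2 sqrt t] on [[0, 1]], the map [t |-> t ln t] extends
    continuously by [0] at [t = 0]; hence the entropy of a probability vector
    is continuous on the closed simplex, and at a vector with zero entries its
    value is the entropy of the refined variable.  The marginal and joint
    distributions of [B_eps] converge to those of [B] as [eps -> 0+], so the
    three entropies of [B_eps] converge to [H(X_B^+)], [H(Y_B^+)] and
    [H((X_B Y_B)^+)], and [IA(B_eps)] converges to the corresponding quotient
    because its denominator tends to [min(H(X_B^+), H(Y_B^+)) = H(X_B^+) > 0]. *)

Lemma cvgr_sum (R : realType) (T I : Type) (F : set_system T) (FF : Filter F)
    (r : seq I) (P : pred I) (f : I -> T -> R) (l : I -> R) :
  (forall i, P i -> f i t @[t --> F] --> l i) ->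
  \sum_(i <- r | P i) f i t @[t --> F] --> \sum_(i <- r | P i) l i.
Proof. by move=> f_cvg; apply: cvg_big => //; exact: add_continuous. Qed.

Section xlnx.
Variable R : realType.

(* [ln x] and [Num.sqrt x] are both [0] for [x <= 0], so the bound is trivial there. *)
Lemma xlnx_bound (x : R) : x <= 1 -> - (2 * Num.sqrt x) <= x * ln x <= 0.
Proof.
move=> x_le1; have [x_le0|x_gt0] := leP x 0.
  by rewrite ln0 // mulr0 lexx oppr_le0 mulr_ge0 ?sqrtr_ge0.
apply/andP; split; last by rewrite mulr_ge0_le0 ?ln_le0 // ltW.
set s := Num.sqrt x; have s_gt0 : 0 < s by rewrite sqrtr_gt0.
have x_sqr : x = s ^+ 2 by rewrite sqr_sqrtr // ltW.
have ln_x : ln x = 2 * ln s by rewrite x_sqr lnXn // mulr_natl.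
have ln_s : - ln s < s^-1 by rewrite -lnV ?ln_sublinear ?posrE ?invr_gt0.
have : s ^+ 2 * - ln s <= s ^+ 2 * s^-1 by rewrite ler_wpM2l ?exprn_ge0 ?ltW.
rewrite [in X in _ <= X]expr2 mulfK ?gt_eqF // mulrN => h.
rewrite ln_x x_sqr mulrCA; lra.
Qed.

Lemma continuous_xlnx : continuous (fun x : R => x * ln x).
Proof.
move=> p; have [p_le0|p_gt0] := leP p 0; last first.
  exact: cvgM cvg_id (continuous_ln p_gt0).
rewrite /continuous_at ln0 // mulr0.
have lower : - (2 * Num.sqrt x) @[x --> p] --> (0 : R).
  have sqrt_p : Num.sqrt p = 0 by apply/eqP; rewrite sqrtr_eq0.
  rewrite -oppr0 -(mulr0 2) -sqrt_p.
  by apply: cvgN; apply: cvgMr; exact: sqrt_continuous.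
apply: (squeeze_cvgr _ lower (cvg_cst 0)).
near=> x; apply: xlnx_bound; apply: ltW; near: x.
by apply: cvgr_lt; [exact: cvg_id | rewrite (le_lt_trans p_le0)].
Unshelve. all: by end_near.
Qed.

End xlnx.

Section entropy.
Variables (R : realType) (I : finType).

Lemma entropy_plusE (p : I -> R) : (forall i, 0 <= p i) ->
  entropy_plus p = entropy p.
Proof.
move=> p_ge0; rewrite /entropy_plus big_mkcond; congr (- _).
apply: eq_bigr => i _; case: ltP => // p_le0.
by rewrite (@le_anti _ _ (p i) 0) ?p_le0 ?p_ge0 // mul0r.
Qed.

Lemma entropy_cvg (T : Type) (F : set_system T) (FF : Filter F)
    (p : T -> I -> R) (q : I -> R) :
  (forall i, p t i @[t --> F] --> q i) -> entropy (p t) @[t --> F] --> entropy q.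
Proof.
move=> p_cvg; apply: cvgN; apply: cvgr_sum => i _; rewrite /log2.
under eq_fun do rewrite mulrA.
rewrite mulrA; apply: cvgMl.
exact: (continuous_cvg _ (@continuous_xlnx _ _) (p_cvg i)).
Qed.

End entropy.

Section distributions.
Variables (R : realType) (n : nat) (M : 'M[R]_n).
Hypothesis M_ge0 : forall y x, 0 <= M y x.

Lemma Smx_ge0 : 0 <= Smx M.
Proof. by rewrite /Smx sumr_ge0 // => y _; rewrite sumr_ge0. Qed.

Lemma Smx_gt0 : (exists y x, M y x != 0) -> 0 < Smx M.
Proof.
case=> y0 [x0 M_neq0]; apply: (@lt_le_trans _ _ (M y0 x0)).
  by rewrite lt0r M_neq0 M_ge0.
rewrite /Smx (bigD1 y0) //= (bigD1 x0) //= -addrA lerDl.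
by rewrite addr_ge0 ?sumr_ge0 // => y _; rewrite sumr_ge0.
Qed.

Lemma pX_ge0 x : 0 <= pX M x.
Proof. by rewrite divr_ge0 ?Smx_ge0 ?sumr_ge0. Qed.

Lemma pY_ge0 y : 0 <= pY M y.
Proof. by rewrite divr_ge0 ?Smx_ge0 ?sumr_ge0. Qed.

Lemma pXY_ge0 yx : 0 <= pXY M yx.
Proof. by rewrite divr_ge0 ?Smx_ge0. Qed.

End distributions.

Section IA_limit.
Variables (R : realType) (n : nat) (T : Type) (F : set_system T).
Hypothesis FF : Filter F.
Variables (M_ : T -> 'M[R]_n) (M : 'M[R]_n).
Hypothesis M_cvg : forall y x, M_ t y x @[t --> F] --> M y x.
Hypothesis SM_neq0 : Smx M != 0.

Lemma Smx_cvg : Smx (M_ t) @[t --> F] --> Smx M.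
Proof. by apply: cvgr_sum => y _; apply: cvgr_sum. Qed.

Lemma pX_cvg x : pX (M_ t) x @[t --> F] --> pX M x.
Proof. by apply: cvgM; [apply: cvgr_sum | apply: cvgV; last exact: Smx_cvg]. Qed.

Lemma pY_cvg y : pY (M_ t) y @[t --> F] --> pY M y.
Proof. by apply: cvgM; [apply: cvgr_sum | apply: cvgV; last exact: Smx_cvg]. Qed.

Lemma pXY_cvg yx : pXY (M_ t) yx @[t --> F] --> pXY M yx.
Proof. by apply: cvgM; [exact: M_cvg | apply: cvgV; last exact: Smx_cvg]. Qed.

Lemma IA_cvg : (forall y x, 0 <= M y x) ->
  Num.min (entropy_plus (pX M)) (entropy_plus (pY M)) != 0 ->
  IA (M_ t) @[t --> F] -->
    (entropy_plus (pX M) + entropy_plus (pY M) - entropy_plus (pXY M))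
    / Num.min (entropy_plus (pX M)) (entropy_plus (pY M)).
Proof.
move=> M_ge0; rewrite !entropy_plusE; [|exact: pXY_ge0|exact: pY_ge0|exact: pX_ge0].
have HX := entropy_cvg FF pX_cvg; have HY := entropy_cvg FF pY_cvg.
have HXY := entropy_cvg FF pXY_cvg.
move=> min_neq0; apply: cvgM; first exact: cvgB (cvgD HX HY) HXY.
apply: cvgV min_neq0 _; apply: continuous2_cvg HX HY.
exact: (@min_continuous _ R (_, _)).
Qed.

End IA_limit.

Lemma zero_freed_cvg (R : realType) (n : nat) (B : 'M[R]_n) y x :
  zero_freed B e y x @[e --> 0^'+] --> B y x.
Proof.
under eq_fun do rewrite mxE.
have [->|_] := eqVneq (B y x) 0; last exact: cvg_cst.
exact/cvg_at_right_filter/cvg_id.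
Qed.

Theorem theorem1 (R : realType) (n : nat) (B : 'M[R]_n) :
  (2 <= n)%N ->
  (forall y x, 0 <= B y x) ->
  (exists y x, B y x != 0) ->
  0 < entropy_plus (pX B) ->
  entropy_plus (pX B) <= entropy_plus (pY B) ->
  IA (zero_freed B eps) @[eps --> 0^'+] -->
    1 + (entropy_plus (pY B) - entropy_plus (pXY B)) / entropy_plus (pX B).
Proof.
move=> _ B_ge0 B_neq0 HX_gt0 HX_le_HY.
have min_HX : Num.min (entropy_plus (pX B)) (entropy_plus (pY B)) = entropy_plus (pX B).
  exact: min_l.
have -> : 1 + (entropy_plus (pY B) - entropy_plus (pXY B)) / entropy_plus (pX B) =
    (entropy_plus (pX B) + entropy_plus (pY B) - entropy_plus (pXY B))
    / Num.min (entropy_plus (pX B)) (entropy_plus (pY B)).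
  by rewrite min_HX; field; rewrite gt_eqF.
apply: IA_cvg => //; first exact: zero_freed_cvg.
- by rewrite gt_eqF // Smx_gt0.
- by rewrite min_HX gt_eqF.
Qed.
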